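(* Let $n=2k+1$ be odd with $k\ge1$, $\theta=\frac{2\pi}{n+2}$, and for $L>0$ let $\mathcal{N}^{(L)}=\{(\ell_j,r_j): j\in[1:n]\}$ be given by $\ell_1=1$, $r_1=L$, and $$\ell_{2i}=\ell_{2i+1}=\frac{\sin(i\theta)+\sin((i+1)\theta)}{\sin((i+1)\theta)},\qquad r_{2i}=r_{2i+1}=\frac{\sin(i\theta)+\sin((i+1)\theta)}{\sin(i\theta)},\qquad i\in[1:k].$$ Then $\mathsf{C}_1(\mathcal{N}_j)=1$ for all $j\in[2:n]$, $\mathsf{C}_1(\mathcal{N}^{(L)})=1$ for every $L>0$, $\mathsf{C}_n(\mathcal{N}^{(L)})\le\ell_n=2+2\cos\theta$ for every $L>0$, and $\lim_{L\to\infty}\mathsf{C}_n(\mathcal{N}^{(L)})=2+2\cos\theta$. Hence $\lim_{L\to\infty}\frac{\mathsf{C}_1(\mathcal{N}^{(L)})}{\mathsf{C}_n(\mathcal{N}^{(L)})}=\frac{1}{2+2\cos\left(\frac{2\pi}{n+2}\right)}$.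
   Context: For a network $\mathcal{N}=\{(\ell_i,r_i): i\in[1:n]\}$ with nonnegative link capacities, with complements inside $[1:n]$ and maxima over empty sets equal to $0$, the approximate capacity is $\mathsf{C}_n(\mathcal{N})=\max_{\boldsymbol\lambda}\min_{\Omega\subseteq[1:n]}\sum_{\mathcal{S}\subseteq[1:n]}\lambda_{\mathcal{S}}\big(\max_{i\in\mathcal{S}^c\cap\Omega^c}\ell_i+\max_{i\in\mathcal{S}\cap\Omega}r_i\big)$, the maximum being over schedules $\boldsymbol\lambda=(\lambda_{\mathcal{S}})_{\mathcal{S}\subseteq[1:n]}$, $\lambda_{\mathcal{S}}\ge0$, $\sum_{\mathcal{S}}\lambda_{\mathcal{S}}=1$. $\mathsf{C}_1(\mathcal{N}_i)=\frac{\ell_ir_i}{\ell_i+r_i}$ and $\mathsf{C}_1(\mathcal{N})=\max_i\mathsf{C}_1(\mathcal{N}_i)$. *)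

From Stdlib Require Import Reals List Arith.
Import ListNotations.
Open Scope R_scope.

(* A network with n links is given by link capacities l, r : nat -> R,
   where link j (j in [1:n]) has capacities (l j, r j).
   A subset of [1:n] is encoded as a list of n booleans: the (j-1)-th
   entry (0-based) says whether link j belongs to the subset. *)

Fixpoint all_subsets (n : nat) : list (list bool) :=
  match n with
  | O => [ [] ]
  | S m => map (cons true) (all_subsets m) ++ map (cons false) (all_subsets m)
  end.

(* max_{i in [1:n], sel (i-1) = true} f i, with max over the empty set = 0.
   (Capacities are nonnegative, so starting the fold at 0 is exact.) *)
Fixpoint max_sel_aux (sel : list bool) (f : nat -> R) (j : nat) : R :=
  match sel with
  | [] => 0
  | b :: sel' =>
      let rest := max_sel_aux sel' f (S j) in
      if b then Rmax (f j) rest else rest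
  end.
Definition max_sel (sel : list bool) (f : nat -> R) : R := max_sel_aux sel f 1.

Definition sel_and (a b : list bool) : list bool := map (fun p => andb (fst p) (snd p)) (combine a b).
Definition sel_compl (a : list bool) : list bool := map negb a.

(* Minimum of a (nonempty) list of reals; 0 on the empty list (never used). *)
Definition Rmin_list (xs : list R) : R :=
  match xs with [] => 0 | x :: xs' => fold_right Rmin x xs' end.

Definition Rsum_list (xs : list R) : R := fold_right Rplus 0 xs.

Definition schedule (n : nat) (lam : list bool -> R) : Prop :=
  (forall S, In S (all_subsets n) -> 0 <= lam S) /\
  Rsum_list (map lam (all_subsets n)) = 1.

Definition cut_value (n : nat) (l r : nat -> R) (lam : list bool -> R)
  (Om : list bool) : R :=
  Rsum_list (map (fun S =>
     lam S * (max_sel (sel_and (sel_compl S) (sel_compl Om)) l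
              + max_sel (sel_and S Om) r)) (all_subsets n)).

Definition sched_value (n : nat) (l r : nat -> R) (lam : list bool -> R) : R :=
  Rmin_list (map (cut_value n l r lam) (all_subsets n)).

Definition is_Cn (n : nat) (l r : nat -> R) (c : R) : Prop :=
  (exists lam, schedule n lam /\ sched_value n l r lam = c) /\
  (forall lam, schedule n lam -> sched_value n l r lam <= c).

Definition C1_link (l r : R) : R := l * r / (l + r).

Fixpoint C1_aux (m : nat) (l r : nat -> R) : R :=
  match m with
  | O => 0
  | S O => C1_link (l 1%nat) (r 1%nat)
  | S m' => Rmax (C1_link (l m) (r m)) (C1_aux m' l r)
  end.
Definition C1net (n : nat) (l r : nat -> R) : R := C1_aux n l r.

Definition theta_of (k : nat) : R := 2 * PI / INR (2 * k + 3).

Definition ellL (k : nat) (L : R) (j : nat) : R :=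
  match j with
  | 1%nat => 1
  | _ => let i := INR (Nat.div2 j) in
         (sin (i * theta_of k) + sin ((i + 1) * theta_of k)) / sin ((i + 1) * theta_of k)
  end.

Definition rL (k : nat) (L : R) (j : nat) : R :=
  match j with
  | 1%nat => L
  | _ => let i := INR (Nat.div2 j) in
         (sin (i * theta_of k) + sin ((i + 1) * theta_of k)) / sin (i * theta_of k)
  end.

(* With a_i = sin(i theta), the capacities l_(2i) = (a_i + a_(i+1))/a_(i+1) and
   r_(2i) = (a_i + a_(i+1))/a_i satisfy l_(2m) + r_(2m+2) = 2 + 2cos theta, by the
   recurrence a_m + a_(m+2) = 2 cos theta a_(m+1), and l_(2k) = 2 + 2cos theta,
   because (2k+3) theta = 2 pi gives a_(k+2) = -a_(k+1); and l_1 = 1 since a_0 = 0.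
   Schedule link 1 alone with weight e and the even links, resp. the odd links
   >= 3, with weight (1-e)/2 each. A cut through link 1 pays at least e L. A cut
   avoiding link 1 pays at least 2 + 2cos theta in each alternating state: going
   up the chain from link 1, either all links stay outside the cut, or the first
   link entering it carries r_(2m+2) next to an outside link carrying l_(2m).
   So C_n >= min(e L, (1-e)(2 + 2cos theta)) -> 2 + 2cos theta, while the empty
   cut gives C_n <= max_i l_i = l_n. The maximising schedule exists because the
   minimum of finitely many affine functions attains its maximum on a simplex. *)

From Stdlib Require Import Reals List Lra Lia Bool ClassicalEpsilon.
Import ListNotations.
Open Scope R_scope.

Lemma Rsum_list_map_ext {A} (l : list A) (f g : A -> R) :
  (forall x, In x l -> f x = g x) -> Rsum_list (map f l) = Rsum_list (map g l).
Proof. intros H; f_equal; apply map_ext_in; auto. Qed.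

Lemma Rsum_list_map_scal {A} (l : list A) (f : A -> R) c :
  Rsum_list (map (fun x => c * f x) l) = c * Rsum_list (map f l).
Proof. induction l as [|x l IH]; simpl; [ring|]. rewrite IH; ring. Qed.

Lemma Rsum_list_map_plus {A} (l : list A) (f g : A -> R) :
  Rsum_list (map (fun x => f x + g x) l) = Rsum_list (map f l) + Rsum_list (map g l).
Proof. induction l as [|x l IH]; simpl; [ring|]. rewrite IH; ring. Qed.

Lemma Rsum_list_map_le {A} (l : list A) (f g : A -> R) :
  (forall x, In x l -> f x <= g x) -> Rsum_list (map f l) <= Rsum_list (map g l).
Proof.
  induction l as [|x l IH]; simpl; intros H; [lra|].
  assert (f x <= g x) by auto. assert (Rsum_list (map f l) <= Rsum_list (map g l)) by auto. lra.
Qed.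

Lemma Rsum_list_map_nonneg {A} (l : list A) (f : A -> R) :
  (forall x, In x l -> 0 <= f x) -> 0 <= Rsum_list (map f l).
Proof.
  induction l as [|x l IH]; simpl; intros H; [lra|].
  assert (0 <= f x) by auto. assert (0 <= Rsum_list (map f l)) by auto. lra.
Qed.

Lemma Rsum_list_map_In_le {A} (l : list A) (f : A -> R) x :
  (forall y, In y l -> 0 <= f y) -> In x l -> f x <= Rsum_list (map f l).
Proof.
  induction l as [|y l IH]; simpl; intros H Hx; [contradiction|].
  assert (0 <= Rsum_list (map f l)) by (apply Rsum_list_map_nonneg; auto).
  destruct Hx as [<-|Hx]; [lra|].
  assert (0 <= f y) by auto. assert (f x <= Rsum_list (map f l)) by auto. lra.
Qed.

Lemma Rsum_list_map_indicator {A} (eqA : forall x y : A, {x = y} + {x <> y})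
    (l : list A) a (g : A -> R) :
  NoDup l -> In a l -> Rsum_list (map (fun x => if eqA x a then g x else 0) l) = g a.
Proof.
  induction l as [|x l IH]; intros Hnd Hin; [destruct Hin|].
  apply NoDup_cons_iff in Hnd as [Hx Hnd]. simpl.
  destruct (eqA x a) as [<-|Hne].
  - rewrite (Rsum_list_map_ext l _ (fun _ => 0 * 0)).
    + rewrite Rsum_list_map_scal. ring.
    + intros y Hy. destruct (eqA y x); [subst; contradiction|ring].
  - destruct Hin as [->|Hin]; [congruence|]. rewrite IH; auto. ring.
Qed.

Lemma Rmin_list_le (xs : list R) x : In x xs -> Rmin_list xs <= x.
Proof.
  destruct xs as [|y ys]; simpl; [tauto|].
  revert x; induction ys as [|z zs IH]; simpl; intros x Hx.
  - destruct Hx as [->|[]]; lra.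
  - destruct Hx as [->|[->|Hx]].
    + assert (fold_right Rmin x zs <= x) by (apply IH; auto).
      assert (Rmin z (fold_right Rmin x zs) <= fold_right Rmin x zs) by apply Rmin_r. lra.
    + apply Rmin_l.
    + assert (fold_right Rmin y zs <= x) by (apply IH; auto).
      assert (Rmin z (fold_right Rmin y zs) <= fold_right Rmin y zs) by apply Rmin_r. lra.
Qed.

Lemma Rmin_list_glb (xs : list R) m :
  xs <> [] -> (forall x, In x xs -> m <= x) -> m <= Rmin_list xs.
Proof.
  destruct xs as [|y ys]; simpl; [tauto|]. intros _ H.
  induction ys as [|z zs IH]; simpl in *; auto.
  apply Rmin_glb; auto. apply IH. intros x [->|Hx]; auto.
Qed.

Lemma Rmin_list_In (xs : list R) : xs <> [] -> In (Rmin_list xs) xs.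
Proof.
  destruct xs as [|y ys]; simpl; [tauto|]. intros _.
  induction ys as [|z zs IH]; simpl in *; auto.
  unfold Rmin; destruct Rle_dec; auto. destruct IH; auto.
Qed.

Lemma Rmin_list_map_le_shift {B} (Bs : list B) (f g : B -> R) e :
  Bs <> [] -> (forall b, In b Bs -> f b <= g b + e) ->
  Rmin_list (map f Bs) <= Rmin_list (map g Bs) + e.
Proof.
  intros Hne H.
  assert (Hin : In (Rmin_list (map g Bs)) (map g Bs)).
  { apply Rmin_list_In. destruct Bs; simpl; congruence. }
  apply in_map_iff in Hin as [b [<- Hb]].
  assert (Rmin_list (map f Bs) <= f b) by (apply Rmin_list_le, in_map; auto).
  specialize (H b Hb). lra.
Qed.

Lemma lipschitz_continuity_pt (h : R -> R) K :
  0 <= K -> (forall t s, Rabs (h t - h s) <= K * Rabs (t - s)) ->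
  forall x, continuity_pt h x.
Proof.
  intros HK H x eps Heps. exists (eps / (K + 1)). split.
  - apply Rdiv_lt_0_compat; lra.
  - intros y [_ Hy]. simpl in *. unfold Rdist in *.
    apply Rle_lt_trans with (K * Rabs (y - x)); [apply H|].
    apply Rle_lt_trans with (K * (eps / (K + 1))).
    + apply Rmult_le_compat_l; lra.
    + apply (Rmult_lt_reg_r (K + 1)); [lra|].
      replace (K * (eps / (K + 1)) * (K + 1)) with (K * eps) by (field; lra). nra.
Qed.

Lemma value_lipschitz {X} (P : X -> Prop) (F : R -> X -> R) (mu : R -> X) K :
  (forall t, P (mu t) /\ forall x, P x -> F t x <= F t (mu t)) ->
  (forall x t s, P x -> F t x <= F s x + K * Rabs (t - s)) ->
  forall t s, Rabs (F t (mu t) - F s (mu s)) <= K * Rabs (t - s).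
Proof.
  intros Hmu HF t s.
  destruct (Hmu t) as [Pt Mt], (Hmu s) as [Ps Ms].
  assert (F t (mu t) <= F s (mu t) + K * Rabs (t - s)) by auto.
  assert (F s (mu s) <= F t (mu s) + K * Rabs (t - s))
    by (rewrite Rabs_minus_sym; auto).
  assert (F s (mu t) <= F s (mu s)) by auto.
  assert (F t (mu s) <= F t (mu t)) by auto.
  apply Rabs_le; lra.
Qed.

Definition wsum {A} (l : list A) (lam c : A -> R) : R :=
  Rsum_list (map (fun a => lam a * c a) l).

Definition simplex {A} (l : list A) (lam : A -> R) : Prop :=
  (forall a, In a l -> 0 <= lam a) /\ Rsum_list (map lam l) = 1.

Definition min_affine {A B} (l : list A) (Bs : list B) (d : B -> R) (c : B -> A -> R)
    (lam : A -> R) : R :=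
  Rmin_list (map (fun b => d b + wsum l lam (c b)) Bs).

Lemma wsum_scal {A} (l : list A) (lam c : A -> R) k :
  wsum l lam (fun x => k * c x) = k * wsum l lam c.
Proof.
  unfold wsum. rewrite <- Rsum_list_map_scal.
  apply Rsum_list_map_ext. intros; ring.
Qed.

Lemma Rabs_wsum_le {A} (l : list A) (lam c : A -> R) :
  simplex l lam -> Rabs (wsum l lam c) <= Rsum_list (map (fun x => Rabs (c x)) l).
Proof.
  intros [Hpos Hsum].
  assert (Hle1 : forall x, In x l -> lam x <= 1)
    by (intros x Hx; rewrite <- Hsum; apply Rsum_list_map_In_le; auto).
  clear Hsum. unfold wsum. induction l as [|a l IH]; simpl.
  - rewrite Rabs_R0; lra.
  - eapply Rle_trans; [apply Rabs_triang|].
    assert (Ha : 0 <= lam a <= 1) by (split; [apply Hpos|apply Hle1]; left; reflexivity).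
    assert (Rabs (lam a * c a) <= Rabs (c a)).
    { rewrite Rabs_mult, (Rabs_right (lam a)) by lra.
      assert (0 <= Rabs (c a)) by apply Rabs_pos. nra. }
    assert (Rabs (Rsum_list (map (fun x => lam x * c x) l))
            <= Rsum_list (map (fun x => Rabs (c x)) l))
      by (apply IH; intros; [apply Hpos|apply Hle1]; auto with datatypes).
    lra.
Qed.

Section MaxMinAffine.

Variables A B : Type.
Variable eqA : forall x y : A, {x = y} + {x <> y}.
Variable Bs : list B.
Hypothesis Bs_nonempty : Bs <> [].

(* A weight [lam] on [a :: l] is [t] on [a] and [(1 - t) nu] on [l]; the cost
   of [lam] is then that of [nu] for the instance with [a] absorbed into
   the constant terms. *)
Definition absorb_const (a : A) (d : B -> R) (c : B -> A -> R) (t : R) (b : B) : R :=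
  d b + t * c b a.

Definition absorb_coef (c : B -> A -> R) (t : R) (b : B) (x : A) : R :=
  (1 - t) * c b x.

Lemma min_affine_cons a l d c (lam nu : A -> R) :
  (forall x, In x l -> lam x = (1 - lam a) * nu x) ->
  min_affine (a :: l) Bs d c lam
  = min_affine l Bs (absorb_const a d c (lam a)) (absorb_coef c (lam a)) nu.
Proof.
  intros Hl. unfold min_affine. f_equal. apply map_ext. intros b.
  unfold absorb_const, absorb_coef, wsum. simpl.
  rewrite (Rsum_list_map_ext l (fun x => lam x * c b x)
             (fun x => (1 - lam a) * (nu x * c b x))).
  - rewrite Rsum_list_map_scal.
    rewrite (Rsum_list_map_ext l (fun x => nu x * ((1 - lam a) * c b x))
               (fun x => (1 - lam a) * (nu x * c b x))) by (intros; ring).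
    rewrite Rsum_list_map_scal. ring.
  - intros x Hx. rewrite Hl by auto. ring.
Qed.

Lemma min_affine_absorb_lipschitz a l c : exists K, 0 <= K /\
  forall d nu t s, simplex l nu ->
  min_affine l Bs (absorb_const a d c t) (absorb_coef c t) nu
  <= min_affine l Bs (absorb_const a d c s) (absorb_coef c s) nu + K * Rabs (t - s).
Proof.
  set (Kb := fun b => Rabs (c b a) + Rsum_list (map (fun x => Rabs (c b x)) l)).
  assert (HKb : forall b, 0 <= Kb b).
  { intros b. assert (0 <= Rabs (c b a)) by apply Rabs_pos.
    assert (0 <= Rsum_list (map (fun x => Rabs (c b x)) l))
      by (apply Rsum_list_map_nonneg; intros; apply Rabs_pos).
    unfold Kb; lra. }
  exists (Rsum_list (map Kb Bs)). split; [apply Rsum_list_map_nonneg; auto|].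
  intros d nu t s Hnu. apply Rmin_list_map_le_shift; auto.
  intros b Hb. unfold absorb_const, absorb_coef. rewrite !wsum_scal.
  assert (Hdiff : Rabs (c b a - wsum l nu (c b)) <= Kb b).
  { eapply Rle_trans; [apply Rabs_triang|]. rewrite Rabs_Ropp.
    assert (Rabs (wsum l nu (c b)) <= Rsum_list (map (fun x => Rabs (c b x)) l))
      by (apply Rabs_wsum_le; auto).
    unfold Kb; lra. }
  assert (Kb b * Rabs (t - s) <= Rsum_list (map Kb Bs) * Rabs (t - s))
    by (apply Rmult_le_compat_r; [apply Rabs_pos|apply Rsum_list_map_In_le; auto]).
  assert (Rabs ((t - s) * (c b a - wsum l nu (c b))) <= Kb b * Rabs (t - s)).
  { rewrite Rabs_mult, Rmult_comm. apply Rmult_le_compat_r; [apply Rabs_pos|auto]. }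
  assert (Habs := Rle_abs ((t - s) * (c b a - wsum l nu (c b)))). nra.
Qed.

Lemma simplex_cons_split a l (lam nu0 : A -> R) :
  simplex (a :: l) lam -> simplex l nu0 ->
  0 <= lam a <= 1 /\
  exists nu, simplex l nu /\ forall x, In x l -> lam x = (1 - lam a) * nu x.
Proof.
  intros [Hpos Hsum] Hnu0. simpl in Hsum.
  assert (0 <= lam a) by auto with datatypes.
  assert (0 <= Rsum_list (map lam l)) by (apply Rsum_list_map_nonneg; auto with datatypes).
  split; [lra|].
  destruct (Req_dec (lam a) 1) as [Ha1|Ha1].
  - exists nu0. split; auto. intros x Hx. rewrite Ha1, Rminus_diag, Rmult_0_l.
    apply Rle_antisym; [|auto with datatypes].
    rewrite <- (Rplus_0_r 0). replace 0 with (Rsum_list (map lam l)) at 2 by lra.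
    rewrite Rplus_0_l. apply Rsum_list_map_In_le; auto with datatypes.
  - exists (fun x => lam x / (1 - lam a)). split.
    + split.
      * intros x Hx. apply Rmult_le_pos; [auto with datatypes|].
        apply Rlt_le, Rinv_0_lt_compat; lra.
      * unfold Rdiv. rewrite (Rsum_list_map_ext l _ (fun x => / (1 - lam a) * lam x))
          by (intros; ring).
        rewrite Rsum_list_map_scal. replace (Rsum_list (map lam l)) with (1 - lam a) by lra.
        field. lra.
    + intros x Hx. field. lra.
Qed.

Lemma simplex_cons_glue a l t (nu : A -> R) :
  ~ In a l -> 0 <= t <= 1 -> simplex l nu ->
  simplex (a :: l) (fun x => if eqA x a then t else (1 - t) * nu x).
Proof.
  intros Ha Ht [Hpos Hsum].
  assert (Hl : forall x, In x l -> (if eqA x a then t else (1 - t) * nu x) = (1 - t) * nu x)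
    by (intros x Hx; destruct (eqA x a); [subst; contradiction|auto]).
  split.
  - intros x [<-|Hx].
    + destruct (eqA a a); [lra|congruence].
    + rewrite Hl by auto. apply Rmult_le_pos; [lra|auto].
  - simpl. destruct (eqA a a); [|congruence].
    rewrite (Rsum_list_map_ext l _ _ Hl), Rsum_list_map_scal, Hsum. ring.
Qed.

(* The maximin of finitely many affine functions over a simplex is attained:
   induct on the support, maximising over the weight [t] of the first point,
   which enters Lipschitz-continuously. *)
Lemma min_affine_max_attained (l : list A) :
  l <> [] -> NoDup l -> forall d c, exists lst, simplex l lst /\
  forall lam, simplex l lam -> min_affine l Bs d c lam <= min_affine l Bs d c lst.
Proof.
  induction l as [|a l IH]; intros Hne Hnd d c; [congruence|].
  apply NoDup_cons_iff in Hnd as [Ha Hnd].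
  destruct l as [|a1 l1].
  - exists (fun _ => 1). split; [split; simpl; intros; lra|].
    intros lam [_ Hsum]. simpl in Hsum. apply Req_le.
    unfold min_affine, wsum. f_equal. apply map_ext. intros b. simpl.
    replace (lam a) with 1 by lra. reflexivity.
  - set (l := a1 :: l1) in *.
    set (F := fun t => min_affine l Bs (absorb_const a d c t) (absorb_coef c t)).
    assert (Hopt : forall t, exists mu, simplex l mu /\
                     forall nu, simplex l nu -> F t nu <= F t mu)
      by (intros t; apply IH; [discriminate|assumption]).
    destruct (choice _ Hopt) as [mu Hmu].
    destruct (min_affine_absorb_lipschitz a l c) as [K [HK HFK]].
    assert (Hcont := lipschitz_continuity_pt (fun t => F t (mu t)) K HK
                       (value_lipschitz _ F mu K Hmu (fun nu t s => HFK d nu t s))).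
    destruct (continuity_ab_maj (fun t => F t (mu t)) 0 1 ltac:(lra) (fun t _ => Hcont t))
      as [ts [Hts_max Hts]].
    set (lst := fun x => if eqA x a then ts else (1 - ts) * mu ts x).
    assert (Hlst : simplex (a :: l) lst)
      by (apply simplex_cons_glue; auto; apply Hmu).
    assert (Hlst_l : forall x, In x l -> lst x = (1 - ts) * mu ts x)
      by (intros x Hx; unfold lst; destruct (eqA x a); [subst; contradiction|reflexivity]).
    assert (Hlst_a : lst a = ts) by (unfold lst; destruct (eqA a a); congruence).
    exists lst. split; auto.
    intros lam Hlam.
    destruct (simplex_cons_split a l lam (mu ts) Hlam (proj1 (Hmu ts)))
      as [Hta [nu [Hnu Hlam_nu]]].
    rewrite (min_affine_cons a l d c lam nu Hlam_nu).
    rewrite (min_affine_cons a l d c lst (mu ts)) by (rewrite Hlst_a; exact Hlst_l).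
    rewrite Hlst_a. fold (F (lam a)) (F ts).
    apply Rle_trans with (F (lam a) (mu (lam a))); [apply Hmu; auto|]. auto.
Qed.

End MaxMinAffine.

Lemma In_all_subsets n S : In S (all_subsets n) <-> length S = n.
Proof.
  revert S; induction n as [|n IH]; intros S; simpl.
  - split; [intros [<-|[]]; reflexivity|destruct S; [auto|discriminate]].
  - rewrite in_app_iff, !in_map_iff. split.
    + intros [[S' [<- H]]|[S' [<- H]]]; simpl; f_equal; apply IH; auto.
    + destruct S as [|[] S]; simpl; intros H; [discriminate| |];
        [left|right]; exists S; split; auto; apply IH; lia.
Qed.

Lemma all_subsets_nonempty n : all_subsets n <> [].
Proof.
  intros H. assert (Hin : In (repeat false n) (all_subsets n))
    by (apply In_all_subsets, repeat_length).
  rewrite H in Hin. destruct Hin.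
Qed.

Lemma all_subsets_NoDup n : NoDup (all_subsets n).
Proof.
  assert (Hcons : forall (b : bool) l, NoDup l -> NoDup (map (cons b) l))
    by (intros b l Hl; apply NoDup_map_NoDup_ForallPairs; [intros x y _ _ [=]|]; auto).
  induction n as [|n IH]; simpl.
  - repeat constructor. intros [].
  - apply NoDup_app; auto.
    intros S H1 H2. apply in_map_iff in H1 as [x [<- _]], H2 as [y [Hy _]]. discriminate.
Qed.

Lemma max_sel_aux_nonneg sel f j : 0 <= max_sel_aux sel f j.
Proof.
  revert j; induction sel as [|[] sel IH]; intros j; simpl; [lra| |apply IH].
  eapply Rle_trans; [apply IH|apply Rmax_r].
Qed.

Lemma max_sel_nonneg sel f : 0 <= max_sel sel f.
Proof. apply max_sel_aux_nonneg. Qed.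

Lemma max_sel_aux_ge sel f j p :
  nth p sel false = true -> f (j + p)%nat <= max_sel_aux sel f j.
Proof.
  revert j p; induction sel as [|b sel IH]; intros j [|p] H; simpl in *;
    try discriminate.
  - subst b. rewrite Nat.add_0_r. apply Rmax_l.
  - replace (j + S p)%nat with (S j + p)%nat by lia.
    destruct b; [eapply Rle_trans; [apply IH; auto|apply Rmax_r]|apply IH; auto].
Qed.

(* Link [j] is recorded at 0-based position [j - 1]. *)
Lemma max_sel_ge sel f j :
  (1 <= j)%nat -> nth (j - 1) sel false = true -> f j <= max_sel sel f.
Proof.
  intros Hj H. unfold max_sel. replace j with (1 + (j - 1))%nat at 1 by lia.
  apply max_sel_aux_ge; auto.
Qed.

Lemma max_sel_aux_le sel f j m :
  0 <= m -> (forall p, (p < length sel)%nat -> f (j + p)%nat <= m) ->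
  max_sel_aux sel f j <= m.
Proof.
  revert j; induction sel as [|b sel IH]; intros j Hm H; simpl; [lra|].
  assert (Hrest : max_sel_aux sel f (S j) <= m).
  { apply IH; auto. intros p Hp.
    replace (S j + p)%nat with (j + S p)%nat by lia. apply H; simpl; lia. }
  destruct b; auto. apply Rmax_lub; auto.
  replace j with (j + 0)%nat at 1 by lia. apply H; simpl; lia.
Qed.

Lemma max_sel_le sel f m :
  0 <= m -> (forall j, (1 <= j <= length sel)%nat -> f j <= m) -> max_sel sel f <= m.
Proof. intros Hm H. apply max_sel_aux_le; auto. intros p Hp. apply H. lia. Qed.

Lemma max_sel_all_false sel f :
  (forall p, nth p sel false = false) -> max_sel sel f = 0.
Proof.
  unfold max_sel. generalize 1%nat.
  induction sel as [|b sel IH]; intros j H; simpl; auto.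
  assert (Hb : b = false) by exact (H 0%nat). subst b. apply IH. intros p. exact (H (S p)).
Qed.

Lemma nth_sel_and a b p : nth p (sel_and a b) false = nth p a false && nth p b false.
Proof.
  unfold sel_and. revert b p; induction a as [|x a IH]; intros [|y b] [|p]; simpl; auto.
  - destruct x; reflexivity.
  - destruct (nth p a false); reflexivity.
Qed.

Lemma nth_sel_compl a p :
  (p < length a)%nat -> nth p (sel_compl a) false = negb (nth p a false).
Proof.
  unfold sel_compl. revert p; induction a as [|x a IH]; intros [|p] Hp; simpl in *;
    auto; try lia. apply IH; lia.
Qed.

Lemma length_sel_and a b : length (sel_and a b) = Nat.min (length a) (length b).
Proof. unfold sel_and. rewrite length_map, length_combine. reflexivity. Qed.

Lemma length_sel_compl a : length (sel_compl a) = length a.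
Proof. apply length_map. Qed.

Definition sel_of (n : nat) (P : nat -> bool) : list bool := map (fun p => P (S p)) (seq 0 n).

Lemma length_sel_of n P : length (sel_of n P) = n.
Proof. unfold sel_of. rewrite length_map, length_seq. reflexivity. Qed.

Lemma nth_sel_of n P p : (p < n)%nat -> nth p (sel_of n P) false = P (S p).
Proof.
  intros Hp. unfold sel_of.
  rewrite (nth_indep _ false (P 1%nat)) by (rewrite length_map, length_seq; lia).
  rewrite (map_nth (fun p => P (S p))), seq_nth by lia. reflexivity.
Qed.

Lemma nth_sel_of_and n P Om j : length Om = n -> (1 <= j <= n)%nat ->
  nth (j - 1) (sel_and (sel_of n P) Om) false = P j && nth (j - 1) Om false.
Proof.
  intros Hl Hj. rewrite nth_sel_and, nth_sel_of by lia.
  replace (S (j - 1)) with j by lia. reflexivity.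
Qed.

Lemma nth_compl_sel_of_and n P Om j : length Om = n -> (1 <= j <= n)%nat ->
  nth (j - 1) (sel_and (sel_compl (sel_of n P)) (sel_compl Om)) false
  = negb (P j) && negb (nth (j - 1) Om false).
Proof.
  intros Hl Hj.
  rewrite nth_sel_and, !nth_sel_compl, nth_sel_of by (rewrite ?length_sel_of; lia).
  replace (S (j - 1)) with j by lia. reflexivity.
Qed.

Definition cut_term (l r : nat -> R) (S Om : list bool) : R :=
  max_sel (sel_and (sel_compl S) (sel_compl Om)) l + max_sel (sel_and S Om) r.

Lemma cut_term_nonneg l r S Om : 0 <= cut_term l r S Om.
Proof.
  assert (H1 := max_sel_nonneg (sel_and (sel_compl S) (sel_compl Om)) l).
  assert (H2 := max_sel_nonneg (sel_and S Om) r). unfold cut_term. lra.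
Qed.

Lemma cut_value_wsum n l r lam Om :
  cut_value n l r lam Om = wsum (all_subsets n) lam (fun S => cut_term l r S Om).
Proof. reflexivity. Qed.

Definition eq_sel := list_eq_dec bool_dec.

Lemma is_Cn_exists n l r : exists c, is_Cn n l r c.
Proof.
  destruct (min_affine_max_attained _ _ eq_sel (all_subsets n) (all_subsets_nonempty n)
              (all_subsets n) (all_subsets_nonempty n) (all_subsets_NoDup n)
              (fun _ => 0) (fun Om S => cut_term l r S Om)) as [lst [Hlst Hmax]].
  assert (Hval : forall lam, sched_value n l r lam
            = min_affine (all_subsets n) (all_subsets n) (fun _ => 0)
                (fun Om S => cut_term l r S Om) lam).
  { intros lam. unfold sched_value, min_affine. f_equal. apply map_ext. intros Om.
    rewrite Rplus_0_l. reflexivity. }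
  exists (sched_value n l r lst). split.
  - exists lst. auto.
  - intros lam Hlam. rewrite !Hval. apply Hmax. exact Hlam.
Qed.

(* The empty cut only sees the [l]-capacities of the unscheduled links. *)
Lemma sched_value_le_max_l n l r lam m :
  0 <= m -> (forall j, (1 <= j <= n)%nat -> l j <= m) -> schedule n lam ->
  sched_value n l r lam <= m.
Proof.
  intros Hm Hl [Hpos Hsum].
  assert (Hempty : In (repeat false n) (all_subsets n))
    by (apply In_all_subsets, repeat_length).
  eapply Rle_trans; [apply Rmin_list_le, in_map, Hempty|].
  rewrite cut_value_wsum. unfold wsum.
  apply Rle_trans with (Rsum_list (map (fun S => m * lam S) (all_subsets n))).
  - apply Rsum_list_map_le. intros S HS. rewrite Rmult_comm.
    apply Rmult_le_compat_r; auto.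
    apply In_all_subsets in HS. unfold cut_term.
    rewrite (max_sel_all_false (sel_and S _))
      by (intros p; rewrite nth_sel_and, nth_repeat; apply andb_false_r).
    rewrite Rplus_0_r. apply max_sel_le; auto.
    intros j Hj. rewrite length_sel_and, !length_sel_compl, repeat_length, HS in Hj.
    apply Hl. lia.
  - rewrite Rsum_list_map_scal, Hsum. lra.
Qed.

Definition three_point (S0 S1 S2 : list bool) (w0 w1 w2 : R) (S : list bool) : R :=
  (if eq_sel S S0 then w0 else 0) + (if eq_sel S S1 then w1 else 0)
  + (if eq_sel S S2 then w2 else 0).

Lemma wsum_three_point n S0 S1 S2 w0 w1 w2 (g : list bool -> R) :
  In S0 (all_subsets n) -> In S1 (all_subsets n) -> In S2 (all_subsets n) ->
  wsum (all_subsets n) (three_point S0 S1 S2 w0 w1 w2) g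
  = w0 * g S0 + w1 * g S1 + w2 * g S2.
Proof.
  intros H0 H1 H2. unfold wsum.
  rewrite (Rsum_list_map_ext _ _ (fun S =>
     (if eq_sel S S0 then w0 * g S else 0) + (if eq_sel S S1 then w1 * g S else 0)
     + (if eq_sel S S2 then w2 * g S else 0))).
  - rewrite !Rsum_list_map_plus, !Rsum_list_map_indicator; auto using all_subsets_NoDup.
  - intros S _. unfold three_point.
    destruct (eq_sel S S0), (eq_sel S S1), (eq_sel S S2); ring.
Qed.

Lemma schedule_three_point n S0 S1 S2 w0 w1 w2 :
  In S0 (all_subsets n) -> In S1 (all_subsets n) -> In S2 (all_subsets n) ->
  0 <= w0 -> 0 <= w1 -> 0 <= w2 -> w0 + w1 + w2 = 1 ->
  schedule n (three_point S0 S1 S2 w0 w1 w2).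
Proof.
  intros H0 H1 H2 Hw0 Hw1 Hw2 Hw. split.
  - intros S _. unfold three_point.
    destruct (eq_sel S S0), (eq_sel S S1), (eq_sel S S2); lra.
  - rewrite (Rsum_list_map_ext _ _ (fun S => three_point S0 S1 S2 w0 w1 w2 S * 1))
      by (intros; ring).
    fold (wsum (all_subsets n) (three_point S0 S1 S2 w0 w1 w2) (fun _ => 1)).
    rewrite wsum_three_point; auto. lra.
Qed.

Lemma sin_mul_plus_diff x y t :
  sin y * sin (x + t) - sin x * sin (y + t) = sin t * sin (y - x).
Proof. rewrite !sin_plus, sin_minus. ring. Qed.

Section SineChain.

Variable k : nat.
Hypothesis hk : (1 <= k)%nat.

Local Notation th := (theta_of k).

Definition sine_seq (i : nat) : R := sin (INR i * th).

(* [chain_l i] and [chain_r i] are the capacities of links [2i] and [2i+1];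
   [chain_l 0 = 1] is also the left capacity of link 1. *)
Definition chain_l (i : nat) : R := (sine_seq i + sine_seq (S i)) / sine_seq (S i).
Definition chain_r (i : nat) : R := (sine_seq i + sine_seq (S i)) / sine_seq i.

Lemma theta_pos : 0 < th.
Proof.
  unfold theta_of. apply Rdiv_lt_0_compat; [assert (H := PI_RGT_0); lra|].
  apply lt_0_INR; lia.
Qed.

Lemma angle_bounds m : (m <= k + 1)%nat -> 0 <= INR m * th < PI.
Proof.
  intros Hm. assert (HD : 0 < INR (2 * k + 3)) by (apply lt_0_INR; lia).
  assert (H : INR (2 * m) < INR (2 * k + 3)) by (apply lt_INR; lia).
  rewrite mult_INR in H. simpl (INR 2) in H.
  assert (0 <= INR m) by apply pos_INR. assert (HP := PI_RGT_0).
  unfold theta_of.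
  replace (INR m * (2 * PI / INR (2 * k + 3))) with (PI * (2 * INR m / INR (2 * k + 3)))
    by (field; lra).
  assert (0 <= 2 * INR m / INR (2 * k + 3))
    by (apply Rmult_le_pos; [lra|apply Rlt_le, Rinv_0_lt_compat; lra]).
  assert (2 * INR m / INR (2 * k + 3) < 1)
    by (apply (Rmult_lt_reg_r (INR (2 * k + 3))); auto; field_simplify; lra).
  nra.
Qed.

Lemma sine_seq_pos i : (1 <= i <= k + 1)%nat -> 0 < sine_seq i.
Proof.
  intros Hi. destruct (angle_bounds i ltac:(lia)) as [H1 H2].
  assert (0 < INR i) by (apply lt_0_INR; lia). assert (Ht := theta_pos).
  apply sin_gt_0; nra.
Qed.

Lemma sine_seq_0 : sine_seq 0 = 0.
Proof. unfold sine_seq. simpl. rewrite Rmult_0_l. apply sin_0. Qed.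

Lemma sine_seq_rec m : sine_seq m + sine_seq (S (S m)) = 2 * cos th * sine_seq (S m).
Proof.
  unfold sine_seq. rewrite !S_INR.
  replace ((INR m + 1 + 1) * th) with ((INR m + 1) * th + th) by ring.
  replace (INR m * th) with ((INR m + 1) * th - th) by ring.
  rewrite sin_plus, sin_minus. ring.
Qed.

(* [(2k+3) th = 2 pi] reflects the sequence about [k + 3/2]. *)
Lemma sine_seq_reflect : sine_seq (k + 2) = - sine_seq (k + 1).
Proof.
  unfold sine_seq.
  replace (INR (k + 2) * th) with (2 * PI - INR (k + 1) * th).
  - rewrite sin_minus, sin_2PI, cos_2PI. ring.
  - assert (HD : 0 < INR (2 * k + 3)) by (apply lt_0_INR; lia).
    assert (INR (k + 2) + INR (k + 1) = INR (2 * k + 3))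
      by (rewrite <- plus_INR; f_equal; lia).
    unfold theta_of. replace (INR (k + 2)) with (INR (2 * k + 3) - INR (k + 1)) by lra.
    field; lra.
Qed.

Lemma chain_l_0 : chain_l 0 = 1.
Proof.
  unfold chain_l. rewrite sine_seq_0.
  assert (0 < sine_seq 1) by (apply sine_seq_pos; lia). field; lra.
Qed.

Lemma chain_l_last : chain_l k = 2 + 2 * cos th.
Proof.
  unfold chain_l. assert (Hrec := sine_seq_rec k). assert (Href := sine_seq_reflect).
  replace (S (S k)) with (k + 2)%nat in Hrec by lia.
  replace (S k) with (k + 1)%nat in * by lia.
  assert (0 < sine_seq (k + 1)) by (apply sine_seq_pos; lia).
  apply (Rmult_eq_reg_r (sine_seq (k + 1))); [|lra]. field_simplify; [|lra]. nra.
Qed.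

Lemma chain_l_r_succ m : (m + 1 <= k)%nat -> chain_l m + chain_r (S m) = 2 + 2 * cos th.
Proof.
  intros Hm. unfold chain_l, chain_r. assert (Hrec := sine_seq_rec m).
  assert (0 < sine_seq (S m)) by (apply sine_seq_pos; lia).
  apply (Rmult_eq_reg_r (sine_seq (S m))); [|lra]. field_simplify; [|lra]. nra.
Qed.

Lemma C1_link_chain i : (1 <= i <= k)%nat -> C1_link (chain_l i) (chain_r i) = 1.
Proof.
  intros Hi. unfold C1_link, chain_l, chain_r.
  assert (0 < sine_seq i) by (apply sine_seq_pos; lia).
  assert (0 < sine_seq (S i)) by (apply sine_seq_pos; lia).
  field. repeat split; nra.
Qed.

(* [sine_seq i / sine_seq (i+1)] increases up to [i = k]. *)
Lemma chain_l_le_last i : (i <= k)%nat -> chain_l i <= chain_l k.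
Proof.
  intros Hi. unfold chain_l.
  assert (0 < sine_seq (S i)) by (apply sine_seq_pos; lia).
  assert (0 < sine_seq (S k)) by (apply sine_seq_pos; lia).
  assert (Hcross : sine_seq i * sine_seq (S k) <= sine_seq k * sine_seq (S i)).
  { unfold sine_seq. rewrite !S_INR, !Rmult_plus_distr_r, !Rmult_1_l.
    assert (Hd := sin_mul_plus_diff (INR i * th) (INR k * th) th).
    assert (0 <= sin th).
    { destruct (angle_bounds 1 ltac:(lia)) as [H1 H2]. simpl in H1, H2.
      rewrite Rmult_1_l in H1, H2. apply sin_ge_0; lra. }
    assert (0 <= sin (INR k * th - INR i * th)).
    { rewrite <- Rmult_minus_distr_r, <- minus_INR by lia.
      destruct (angle_bounds (k - i) ltac:(lia)). apply sin_ge_0; lra. }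
    nra. }
  apply (Rmult_le_reg_r (sine_seq (S i) * sine_seq (S k))); [nra|].
  field_simplify; [|lra|lra]. nra.
Qed.

Lemma one_lt_chain_top : 1 < 2 + 2 * cos th.
Proof.
  rewrite <- chain_l_last. unfold chain_l.
  assert (0 < sine_seq k) by (apply sine_seq_pos; lia).
  assert (0 < sine_seq (S k)) by (apply sine_seq_pos; lia).
  apply (Rmult_lt_reg_r (sine_seq (S k))); auto. field_simplify; lra.
Qed.

Lemma first_switch (Q : nat -> bool) m : Q 0%nat = false ->
  (forall i, (i <= m)%nat -> Q i = false) \/
  exists i, (i < m)%nat /\ Q i = false /\ Q (S i) = true.
Proof.
  intros H0. induction m as [|m IH].
  - left. intros i Hi. replace i with 0%nat by lia. exact H0.
  - destruct IH as [Hall|[i [Hi HQ]]]; [|right; exists i; split; [lia|auto]].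
    destruct (Q (S m)) eqn:E.
    + right. exists m. split; [lia|]. split; auto.
    + left. intros i Hi. destruct (Nat.eq_dec i (S m)) as [->|]; auto. apply Hall. lia.
Qed.

(* Walking along the chain from a link outside the cut, either every link stays
   outside (collecting [chain_l k]) or there is a first switch [m -> m+1]
   (collecting [chain_l m + chain_r (m+1)]); both equal [2 + 2 cos th]. *)
Lemma chain_cut_bound (Q : nat -> bool) ml mr :
  Q 0%nat = false -> 0 <= mr ->
  (forall i, (i <= k)%nat -> Q i = false -> chain_l i <= ml) ->
  (forall i, (1 <= i <= k)%nat -> Q i = true -> chain_r i <= mr) ->
  2 + 2 * cos th <= ml + mr.
Proof.
  intros H0 Hmr Hl Hr.
  destruct (first_switch Q k H0) as [Hall|[m [Hm [Qm QSm]]]].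
  - rewrite <- chain_l_last. assert (chain_l k <= ml) by auto. lra.
  - rewrite <- (chain_l_r_succ m) by lia.
    assert (chain_l m <= ml) by (apply Hl; auto; lia).
    assert (chain_r (S m) <= mr) by (apply Hr; auto; lia). lra.
Qed.

End SineChain.

Section Network.

Variable k : nat.
Hypothesis hk : (1 <= k)%nat.
Variable L : R.

Local Notation n := (2 * k + 1)%nat.
Local Notation top := (2 + 2 * cos (theta_of k)).

Lemma ellL_chain j : ellL k L j = chain_l k (Nat.div2 j).
Proof.
  destruct j as [|[|j]]; [| |unfold ellL, chain_l, sine_seq; rewrite S_INR; reflexivity].
  - unfold ellL, chain_l, sine_seq. rewrite S_INR. reflexivity.
  - symmetry. apply chain_l_0; auto.
Qed.

Lemma rL_chain j : j <> 1%nat -> rL k L j = chain_r k (Nat.div2 j).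
Proof.
  intros Hj. unfold rL, chain_r, sine_seq. rewrite S_INR.
  destruct j as [|[|j]]; [reflexivity|congruence|reflexivity].
Qed.

Lemma div2_le_k j : (j <= n)%nat -> (Nat.div2 j <= k)%nat.
Proof. intros Hj. rewrite <- (Nat.div2_odd' k). apply Nat.div2_le_mono. exact Hj. Qed.

Lemma C1_link_network j : (2 <= j <= n)%nat -> C1_link (ellL k L j) (rL k L j) = 1.
Proof.
  intros Hj. rewrite ellL_chain, rL_chain by lia. apply C1_link_chain; auto.
  split; [apply Nat.div2_le_lower_bound; lia|apply div2_le_k; lia].
Qed.

Lemma C1_aux_network m : 0 < L -> (2 <= m <= n)%nat -> C1_aux m (ellL k L) (rL k L) = 1.
Proof.
  intros HL. induction m as [|[|m] IH]; intros Hm; try lia.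
  change (C1_aux (S (S m)) (ellL k L) (rL k L))
    with (Rmax (C1_link (ellL k L (S (S m))) (rL k L (S (S m))))
               (C1_aux (S m) (ellL k L) (rL k L))).
  rewrite C1_link_network by lia. apply Rmax_left.
  destruct m as [|m]; [|rewrite IH by lia; lra].
  simpl. unfold C1_link, ellL, rL.
  apply (Rmult_le_reg_r (1 + L)); [lra|]. field_simplify; lra.
Qed.

Lemma ellL_last : ellL k L n = top.
Proof. rewrite ellL_chain, Nat.div2_odd'. apply chain_l_last; auto. Qed.

Lemma ellL_le_top j : (j <= n)%nat -> ellL k L j <= top.
Proof.
  intros Hj. rewrite ellL_chain, <- chain_l_last by auto.
  apply chain_l_le_last; auto. apply div2_le_k; lia.
Qed.

Definition link1_sel : list bool := sel_of n (Nat.eqb 1).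
Definition even_sel : list bool := sel_of n Nat.even.
Definition odd_sel : list bool := sel_of n (fun j => negb (Nat.even j) && negb (Nat.eqb 1 j)).

Section CutAvoidingLink1.

Variable Om : list bool.
Hypothesis Om_length : length Om = n.
Hypothesis link1_notin_Om : nth 0 Om false = false.

Lemma odd_links_cut_bound :
  top <= max_sel (sel_and (sel_compl even_sel) (sel_compl Om)) (ellL k L)
         + max_sel (sel_and odd_sel Om) (rL k L).
Proof.
  apply (chain_cut_bound k hk (fun i => nth (2 * i) Om false));
    auto using max_sel_nonneg.
  - intros i Hi HQ. rewrite <- (Nat.div2_odd' i), <- ellL_chain.
    apply max_sel_ge; [lia|]. unfold even_sel.
    rewrite nth_compl_sel_of_and by (auto; lia).
    replace (2 * i + 1 - 1)%nat with (2 * i)%nat by lia. rewrite HQ, Nat.even_odd. reflexivity.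
  - intros i Hi HQ. rewrite <- (Nat.div2_odd' i), <- rL_chain by lia.
    apply max_sel_ge; [lia|]. unfold odd_sel.
    rewrite nth_sel_of_and by (auto; lia).
    replace (2 * i + 1 - 1)%nat with (2 * i)%nat by lia. rewrite HQ, Nat.even_odd.
    replace (Nat.eqb 1 (2 * i + 1)) with false by (symmetry; apply Nat.eqb_neq; lia).
    reflexivity.
Qed.

(* Position [2i - 1] is link [2i], except for [i = 0] where it is link 1. *)
Lemma even_links_cut_bound :
  top <= max_sel (sel_and (sel_compl odd_sel) (sel_compl Om)) (ellL k L)
         + max_sel (sel_and even_sel Om) (rL k L).
Proof.
  apply (chain_cut_bound k hk (fun i => nth (2 * i - 1) Om false));
    auto using max_sel_nonneg.
  - intros [|i] Hi HQ.
    + change (chain_l k 0) with (chain_l k (Nat.div2 1)). rewrite <- ellL_chain.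
      apply max_sel_ge; [lia|]. unfold odd_sel.
      rewrite nth_compl_sel_of_and by (auto; lia). simpl. rewrite link1_notin_Om. reflexivity.
    + rewrite <- (Nat.div2_double (S i)), <- ellL_chain.
      apply max_sel_ge; [lia|]. unfold odd_sel.
      rewrite nth_compl_sel_of_and by (auto; lia). rewrite HQ, Nat.even_even. reflexivity.
  - intros i Hi HQ. rewrite <- (Nat.div2_double i), <- rL_chain by lia.
    apply max_sel_ge; [lia|]. unfold even_sel.
    rewrite nth_sel_of_and by (auto; lia). rewrite HQ, Nat.even_even. reflexivity.
Qed.

End CutAvoidingLink1.

Definition weighted_schedule (e : R) : list bool -> R :=
  three_point link1_sel even_sel odd_sel e ((1 - e) / 2) ((1 - e) / 2).

Lemma sel_of_In P : In (sel_of n P) (all_subsets n).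
Proof. apply In_all_subsets, length_sel_of. Qed.

Lemma weighted_schedule_is_schedule e : 0 <= e <= 1 -> schedule n (weighted_schedule e).
Proof. intros He. apply schedule_three_point; try apply sel_of_In; lra. Qed.

Lemma weighted_schedule_value e : 0 <= e <= 1 ->
  Rmin (e * L) ((1 - e) * top) <= sched_value n (ellL k L) (rL k L) (weighted_schedule e).
Proof.
  intros He. apply Rmin_list_glb.
  { intros H. apply map_eq_nil in H. revert H. apply all_subsets_nonempty. }
  intros x Hx. apply in_map_iff in Hx as [Om [<- HOm]]. apply In_all_subsets in HOm.
  rewrite cut_value_wsum. unfold weighted_schedule. rewrite wsum_three_point by apply sel_of_In.
  assert (H0 := cut_term_nonneg (ellL k L) (rL k L) link1_sel Om).
  assert (H1 := cut_term_nonneg (ellL k L) (rL k L) even_sel Om).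
  assert (H2 := cut_term_nonneg (ellL k L) (rL k L) odd_sel Om).
  destruct (nth 0 Om false) eqn:Hlink1.
  - apply Rle_trans with (e * L); [apply Rmin_l|].
    assert (L <= cut_term (ellL k L) (rL k L) link1_sel Om).
    { unfold cut_term.
      assert (rL k L 1 <= max_sel (sel_and link1_sel Om) (rL k L)).
      { apply max_sel_ge; [lia|]. unfold link1_sel.
        rewrite nth_sel_of_and by (auto; lia). exact Hlink1. }
      assert (Hl := max_sel_nonneg (sel_and (sel_compl link1_sel) (sel_compl Om)) (ellL k L)).
      simpl in H. lra. }
    assert (e * L <= e * cut_term (ellL k L) (rL k L) link1_sel Om)
      by (apply Rmult_le_compat_l; lra).
    assert (0 <= (1 - e) / 2) by lra. nra.
  - apply Rle_trans with ((1 - e) * top); [apply Rmin_r|].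
    assert (A1 := odd_links_cut_bound Om HOm Hlink1).
    assert (A2 := even_links_cut_bound Om HOm Hlink1).
    assert (top + top <= cut_term (ellL k L) (rL k L) even_sel Om
                         + cut_term (ellL k L) (rL k L) odd_sel Om) by (unfold cut_term; lra).
    assert (0 <= (1 - e) / 2) by lra. nra.
Qed.

Lemma is_Cn_network_bounds c e : is_Cn n (ellL k L) (rL k L) c -> 0 <= e <= 1 ->
  Rmin (e * L) ((1 - e) * top) <= c <= top.
Proof.
  intros [[lam [Hlam <-]] Hmax] He. split.
  - eapply Rle_trans; [apply weighted_schedule_value; auto|].
    apply Hmax, weighted_schedule_is_schedule; auto.
  - apply sched_value_le_max_l; auto.
    + assert (H := one_lt_chain_top k hk). lra.
    + intros j Hj. apply ellL_le_top. lia.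
Qed.

End Network.

Lemma is_Cn_network_tends_to_top k (hk : (1 <= k)%nat) eps : 0 < eps ->
  exists M, forall L, M < L -> forall c, is_Cn (2 * k + 1) (ellL k L) (rL k L) c ->
  Rabs (c - (2 + 2 * cos (theta_of k))) < eps.
Proof.
  intros Heps. set (top := 2 + 2 * cos (theta_of k)).
  assert (Htop : 1 < top) by apply (one_lt_chain_top k hk).
  set (e := eps / (eps + 2 * top)).
  assert (He0 : 0 < e) by (apply Rdiv_lt_0_compat; lra).
  assert (He1 : e < 1)
    by (unfold e; apply (Rmult_lt_reg_r (eps + 2 * top)); [lra|]; field_simplify; lra).
  (* for this [e], [(1 - e) top > top - eps], and [e L > top] once [L > top / e] *)
  exists (top / e). intros L HL c Hc.
  destruct (is_Cn_network_bounds k hk L c e Hc ltac:(lra)) as [Hlo Hhi].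
  fold top in Hlo, Hhi.
  assert (top < e * L).
  { apply (Rmult_lt_compat_l e) in HL; auto.
    replace (e * (top / e)) with top in HL by (field; lra). lra. }
  assert (top - eps < (1 - e) * top)
    by (unfold e; apply (Rmult_lt_reg_r (eps + 2 * top)); [lra|]; field_simplify; nra).
  assert (top - eps < c) by (unfold Rmin in Hlo; destruct Rle_dec; lra).
  apply Rabs_def1; lra.
Qed.

Lemma inv_close T eps : 0 < T -> 0 < eps ->
  exists d, 0 < d /\ forall c, Rabs (c - T) < d -> Rabs (1 / c - 1 / T) < eps.
Proof.
  intros HT Heps. exists (Rmin (T / 2) (eps * T * T / 4)). split.
  { apply Rmin_glb_lt; [lra|]. assert (0 < T * T) by nra. nra. }
  intros c Hc. assert (Hd1 := Rmin_l (T / 2) (eps * T * T / 4)).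
  assert (Hd2 := Rmin_r (T / 2) (eps * T * T / 4)).
  apply Rabs_def2 in Hc as [Hc1 Hc2].
  assert (0 < c * T) by nra.
  replace (1 / c - 1 / T) with ((T - c) / (c * T)) by (field; lra).
  unfold Rdiv. rewrite Rabs_mult, Rabs_inv, (Rabs_right (c * T)) by lra.
  apply (Rmult_lt_reg_r (c * T)); [lra|].
  rewrite Rmult_assoc, Rinv_l, Rmult_1_r by lra.
  assert (Rabs (T - c) < Rmin (T / 2) (eps * T * T / 4))
    by (rewrite Rabs_minus_sym; apply Rabs_def1; lra).
  assert (T * T / 4 < c * T) by nra. nra.
Qed.

Theorem mainTheorem8 (k : nat) (hk : (1 <= k)%nat) :
  let n := (2 * k + 1)%nat in
  let th := theta_of k in
  (forall L : R, 0 < L -> forall j : nat, (2 <= j)%nat /\ (j <= n)%nat ->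
      C1_link (ellL k L j) (rL k L j) = 1) /\
  (forall L : R, 0 < L -> C1net n (ellL k L) (rL k L) = 1) /\
  (forall L : R, 0 < L ->
      (exists c, is_Cn n (ellL k L) (rL k L) c) /\
      (forall c, is_Cn n (ellL k L) (rL k L) c -> c <= ellL k L n) /\
      ellL k L n = 2 + 2 * cos th) /\
  (forall eps : R, 0 < eps -> exists M : R, forall L : R, 0 < L -> M < L ->
      forall c, is_Cn n (ellL k L) (rL k L) c ->
        Rabs (c - (2 + 2 * cos th)) < eps) /\
  (forall eps : R, 0 < eps -> exists M : R, forall L : R, 0 < L -> M < L ->
      forall c, is_Cn n (ellL k L) (rL k L) c ->
        Rabs (C1net n (ellL k L) (rL k L) / c - 1 / (2 + 2 * cos (2 * PI / INR (n + 2)))) < eps).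
Proof.
  intros n th.
  split; [|split; [|split; [|split]]].
  - intros L _ j Hj. apply C1_link_network; auto; lia.
  - intros L HL. apply C1_aux_network; auto; lia.
  - intros L _. split; [apply is_Cn_exists|split; [|apply ellL_last; auto]].
    intros c Hc. rewrite ellL_last by auto.
    apply (is_Cn_network_bounds k hk L c 0 Hc); lra.
  - intros eps Heps. destruct (is_Cn_network_tends_to_top k hk eps Heps) as [M HM].
    exists M. intros L _. apply HM.
  - intros eps Heps.
    assert (Htop : 1 < 2 + 2 * cos th) by apply (one_lt_chain_top k hk).
    replace (n + 2)%nat with (2 * k + 3)%nat by (unfold n; lia). fold (theta_of k) th.
    destruct (inv_close (2 + 2 * cos th) eps ltac:(lra) Heps) as [d [Hd Hinv]].
    destruct (is_Cn_network_tends_to_top k hk d Hd) as [M HM].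
    exists M. intros L HL HML c Hc.
    unfold C1net. rewrite C1_aux_network by (auto; lia). apply Hinv. eauto.
Qed.
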